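(* There is a constant $C>0$ such that the following holds. Let $p,p',q,q'\in M$ with $p'\in[p,\xi_+)$, $q'\in[q,\xi_+)$, $h(p')=h(q')=y$ and $|p'-q'|_y=1$. Then $$\mathrm{dist}(p,p')+\mathrm{dist}(q,q')\le\mathrm{dist}(p,q)+C.$$
   Context: Let $d\ge1$, $0<\lambda_1\le\cdots\le\lambda_d$, and $M$ be $\mathbb{R}^{d+1}$ with coordinates $(y,x)=(y,x_1,\dots,x_d)$ and metric $g=dy^2+\sum_{i=1}^d e^{-2\lambda_i y}dx_i^2$; $\mathrm{dist}$ is its Riemannian distance. Write $h(y,x)=y$. For $p=(y_p,x_p)$, $[p,\xi_+)$ denotes the vertical geodesic ray $\{(y_p+s,x_p):s\ge0\}$. For $u\in\mathbb{R}^d$ and $y\in\mathbb{R}$, $|u|_y=(\sum_{i=1}^d e^{-2\lambda_iy}u_i^2)^{1/2}$, and for points $p=(y,x)$, $\hat p=(y,\hat x)$ at the same height, $|p-\hat p|_y:=|x-\hat x|_y$ (the distance in the flat level set $\{y\}\times\mathbb{R}^d$). *)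

From Stdlib Require Import Reals Lra.
From Coquelicot Require Import Coquelicot.
Open Scope R_scope.

Fixpoint sum_lt (n : nat) (f : nat -> R) : R :=
  match n with O => 0 | S m => sum_lt m f + f m end.

(* A point of M = R^{d+1}: height y and horizontal coordinates x_0..x_{d-1}
   (only indices i < d are meaningful). *)
Record point := Pt { py : R ; px : nat -> R }.

Definition h (p : point) : R := py p.

Definition hnorm (d : nat) (lam : nat -> R) (y : R) (u : nat -> R) : R :=
  sqrt (sum_lt d (fun i => exp (-2 * lam i * y) * (u i)^2)).

Definition hdist (d : nat) (lam : nat -> R) (y : R) (p q : point) : R :=
  hnorm d lam y (fun i => px p i - px q i).

Definition C1 (f : R -> R) : Prop :=
  (forall t, ex_derive f t) /\ (forall t, continuous (Derive f) t).

Definition curve_from_to (d : nat) (cy : R -> R) (cx : nat -> R -> R)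
  (p q : point) : Prop :=
  C1 cy /\ (forall i, (i < d)%nat -> C1 (cx i)) /\
  cy 0 = py p /\ cy 1 = py q /\
  (forall i, (i < d)%nat -> cx i 0 = px p i /\ cx i 1 = px q i).

(* Riemannian length for g = dy^2 + sum_i e^{-2 lam_i y} dx_i^2 *)
Definition curve_length (d : nat) (lam : nat -> R) (cy : R -> R)
  (cx : nat -> R -> R) : R :=
  RInt (fun t => sqrt ((Derive cy t)^2 +
          sum_lt d (fun i => exp (-2 * lam i * cy t) * (Derive (cx i) t)^2)))
       0 1.

Definition rdist (d : nat) (lam : nat -> R) (p q : point) : R :=
  real (Glb_Rbar (fun L => exists cy cx,
          curve_from_to d cy cx p q /\ L = curve_length d lam cy cx)).

(* p' lies on the vertical geodesic ray [p, xi_+) *)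
Definition on_ray (d : nat) (p p' : point) : Prop :=
  exists s, 0 <= s /\ py p' = py p + s /\
    (forall i, (i < d)%nat -> px p' i = px p i).

From Pilot Require Import Defs.
From Stdlib Require Import Reals Lra Psatz Classical.
From Coquelicot Require Import Coquelicot.
Open Scope R_scope.

(* The vertical segments give dist(p,p') <= s and dist(q,q') <= t, where p' = p + s e_y
   and q' = q + t e_y.  For the lower bound on dist(p,q), pick a coordinate j carrying at
   least 1/d of |p'-q'|_y^2 = 1 and look at the hyperbolic plane dy^2 + e^{-2 l y} dx_j^2,
   l = lam_j.  The function F(y,x) = ln(l^2 (x-a)^2 e^{-l y} + e^{l y}) / l with a = x_j(p)
   has gradient of norm at most 1 there, so it is 1-Lipschitz for dist; F(p) = h(p) and
   F(q) >= y + t + ln(l^2/d)/l.  Hence dist(p,q) >= s + t - C. *)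

Lemma le_sqrt_of_sqr_le (x y : R) : 0 <= y -> x ^ 2 <= y -> x <= sqrt y.
Proof.
  intros Hy Hx. destruct (Rle_dec x 0) as [Hneg | Hpos].
  - pose proof (sqrt_pos y). lra.
  - rewrite <- (sqrt_pow2 x) by lra. now apply sqrt_le_1_alt.
Qed.

Lemma Cauchy_Schwarz_ratio (v k P Q S : R) :
  0 < S -> P ^ 2 + Q ^ 2 = S ^ 2 -> (v * P + Q * k) / S <= sqrt (v ^ 2 + k ^ 2).
Proof.
  intros HS HPQ. apply le_sqrt_of_sqr_le; [nra |].
  assert (Hcs : (v * P + Q * k) ^ 2 <= S ^ 2 * (v ^ 2 + k ^ 2)).
  { rewrite <- HPQ. pose proof (pow2_ge_0 (v * Q - P * k)). nra. }
  replace (((v * P + Q * k) / S) ^ 2) with ((v * P + Q * k) ^ 2 / S ^ 2) by (field; lra).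
  apply (Rmult_le_reg_r (S ^ 2)); [nra |].
  unfold Rdiv. rewrite Rmult_assoc, Rinv_l by nra. nra.
Qed.

Lemma sum_lt_eq0 n f : (forall i, (i < n)%nat -> f i = 0) -> sum_lt n f = 0.
Proof.
  induction n as [| n IH]; intros Hf; cbn [sum_lt]; [reflexivity |].
  rewrite IH, (Hf n) by first [lia | intros; apply Hf; lia]. ring.
Qed.

Lemma sum_lt_ge0 n f : (forall i, (i < n)%nat -> 0 <= f i) -> 0 <= sum_lt n f.
Proof.
  induction n as [| n IH]; intros Hf; cbn [sum_lt]; [lra |].
  pose proof (Hf n ltac:(lia)).
  assert (0 <= sum_lt n f) by (apply IH; intros; apply Hf; lia). lra.
Qed.

Lemma sum_lt_ge_term n f j :
  (forall i, (i < n)%nat -> 0 <= f i) -> (j < n)%nat -> f j <= sum_lt n f.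
Proof.
  induction n as [| n IH]; intros Hf Hj; cbn [sum_lt]; [lia |].
  assert (0 <= sum_lt n f) by (apply sum_lt_ge0; intros; apply Hf; lia).
  destruct (Nat.eq_dec j n) as [-> | Hjn]; [lra |].
  assert (f j <= sum_lt n f) by (apply IH; [intros; apply Hf; lia | lia]).
  pose proof (Hf n ltac:(lia)). lra.
Qed.

Lemma sum_lt_le_const n f c : (forall i, (i < n)%nat -> f i <= c) -> sum_lt n f <= INR n * c.
Proof.
  induction n as [| n IH]; intros Hf; cbn [sum_lt]; [simpl; lra |].
  assert (sum_lt n f <= INR n * c) by (apply IH; intros; apply Hf; lia).
  pose proof (Hf n ltac:(lia)). rewrite S_INR. lra.
Qed.

Lemma sum_lt_eq1_exists_ge_inv n f :
  (1 <= n)%nat -> sum_lt n f = 1 -> exists j, (j < n)%nat /\ / INR n <= f j.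
Proof.
  intros Hn Hsum. apply NNPP. intros Hnone.
  assert (Hsmall : forall j, (j < n)%nat -> f j <= / INR n).
  { intros j Hj. left. apply Rnot_le_lt. intros Hge. apply Hnone. now exists j. }
  destruct n as [| m]; [lia |].
  cbn [sum_lt] in Hsum.
  assert (sum_lt m f <= INR m * / INR (S m)) by (apply sum_lt_le_const; intros; apply Hsmall; lia).
  assert (Hlast : f m < / INR (S m)).
  { apply Rnot_le_lt. intros Hge. apply Hnone. exists m. split; [lia | exact Hge]. }
  assert (HSm : 0 < INR (S m)) by (apply lt_0_INR; lia).
  assert (INR m * / INR (S m) + / INR (S m) = 1) by (rewrite S_INR in *; field; lra).
  lra.
Qed.

(* [real] sends the junk value [m_infty] to 0, hence the hypothesis [0 <= L0]. *)
Lemma Glb_Rbar_real_le (E : R -> Prop) L0 : E L0 -> 0 <= L0 -> real (Glb_Rbar E) <= L0.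
Proof.
  intros HE H0. destruct (Glb_Rbar_correct E) as [Hlb _].
  specialize (Hlb L0 HE). destruct (Glb_Rbar E); simpl in *; auto; lra || contradiction.
Qed.

Lemma Glb_Rbar_real_ge (E : R -> Prop) L0 b :
  E L0 -> (forall L, E L -> b <= L) -> b <= real (Glb_Rbar E).
Proof.
  intros HE Hb. destruct (Glb_Rbar_correct E) as [Hlb Hglb].
  assert (Rbar_le (Finite b) (Glb_Rbar E)) by (apply Hglb; intros x Hx; apply Hb, Hx).
  specialize (Hlb L0 HE). destruct (Glb_Rbar E); simpl in *; auto; contradiction.
Qed.

Lemma C1_affine a b : Defs.C1 (fun t => a + b * t).
Proof.
  assert (HD : forall t, Derive (fun t => a + b * t) t = b).
  { intros t. apply is_derive_unique. auto_derive; auto. ring. }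
  split; intros t; [auto_derive; auto |].
  apply (continuous_ext (fun _ => b)); [intros; now rewrite HD | apply continuous_const].
Qed.

Lemma C1_const a : Defs.C1 (fun _ => a).
Proof.
  split; intros t; [auto_derive; auto |].
  apply (continuous_ext (fun _ => 0)); [intros; now rewrite Derive_const | apply continuous_const].
Qed.

Lemma continuous_sqr (f : R -> R) t : continuous f t -> continuous (fun s => f s ^ 2) t.
Proof.
  intros Hf. apply (continuous_comp f (fun x => x ^ 2)); [exact Hf |].
  exact (ex_derive_continuous (fun x : R => x ^ 2) (f t) ltac:(auto_derive; auto)).
Qed.

Lemma diff_le_RInt_of_Derive_le (g sp : R -> R) :
  (forall t, ex_derive g t) -> (forall t, continuous sp t) ->
  (forall t, Derive g t <= sp t) -> g 1 - g 0 <= RInt sp 0 1.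
Proof.
  intros Hg Hsp Hle.
  set (phi := fun t => RInt sp 0 t - g t).
  assert (Hphi : forall t, is_derive phi t (sp t - Derive g t)).
  { intros t. apply (is_derive_minus (RInt sp 0) g); [| now apply Derive_correct].
    apply (is_derive_RInt sp (RInt sp 0) 0); [| apply Hsp].
    apply filter_forall. intros b.
    exact (RInt_correct sp 0 b (ex_RInt_continuous sp 0 b (fun z _ => Hsp z))). }
  destruct (MVT_gen phi 0 1 (fun t => sp t - Derive g t)) as [c [_ Hmvt]].
  - intros; apply Hphi.
  - intros x _. apply continuity_pt_filterlim.
    exact (ex_derive_continuous phi x (ex_intro _ _ (Hphi x))).
  - unfold phi in Hmvt. rewrite RInt_point in Hmvt.
    pose proof (Hle c). change (zero : R) with 0 in Hmvt. nra.
Qed.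

Section Length.

Variables (d : nat) (lam : nat -> R).

Definition speed (cy : R -> R) (cx : nat -> R -> R) (t : R) : R :=
  sqrt (Derive cy t ^ 2 + sum_lt d (fun i => exp (-2 * lam i * cy t) * Derive (cx i) t ^ 2)).

Lemma curve_length_speed cy cx : curve_length d lam cy cx = RInt (speed cy cx) 0 1.
Proof. reflexivity. Qed.

Lemma speed_continuous cy cx :
  Defs.C1 cy -> (forall i, (i < d)%nat -> Defs.C1 (cx i)) -> forall t, continuous (speed cy cx) t.
Proof.
  intros [Hcy HDcy] Hcx t.
  set (terms := fun n t => sum_lt n (fun i => exp (-2 * lam i * cy t) * Derive (cx i) t ^ 2)).
  assert (Hpartial : forall n, (n <= d)%nat -> continuous (terms n) t).
  { induction n as [| n IH]; intros Hn; [apply continuous_const |].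
    apply (continuous_plus (terms n) (fun t => exp (-2 * lam n * cy t) * Derive (cx n) t ^ 2));
      [apply IH; lia |].
    apply (continuous_mult (fun t => exp (-2 * lam n * cy t)) (fun t => Derive (cx n) t ^ 2)).
    - apply (continuous_comp cy (fun y => exp (-2 * lam n * y))).
      + exact (ex_derive_continuous cy t (Hcy t)).
      + exact (ex_derive_continuous (fun y : R => exp (-2 * lam n * y)) (cy t)
                 ltac:(auto_derive; auto)).
    - apply continuous_sqr. apply (Hcx n); lia. }
  apply continuous_sqrt_comp.
  apply (continuous_plus (fun t => Derive cy t ^ 2) (terms d)).
  - apply continuous_sqr, HDcy.
  apply Hpartial. lia.
Qed.

Lemma rdist_le_vertical (p p' : point) s :
  0 <= s -> py p' = py p + s -> (forall i, (i < d)%nat -> px p' i = px p i) ->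
  rdist d lam p p' <= s.
Proof.
  intros Hs Hy Hx. apply Glb_Rbar_real_le; [| lra].
  exists (fun t => py p + s * t), (fun i _ => px p i). split.
  - split; [apply C1_affine |]. split; [intros; apply C1_const |].
    split; [ring |]. split; [rewrite Hy; ring |].
    intros i Hi. now rewrite Hx.
  - rewrite curve_length_speed, (RInt_ext _ (fun _ => s)).
    + rewrite RInt_const. cbv [scal]; simpl. cbv [mult]; simpl. ring.
    + intros x _. unfold speed.
      assert (HD : Derive (fun t => py p + s * t) x = s).
      { apply is_derive_unique. auto_derive; auto. ring. }
      rewrite HD, sum_lt_eq0, Rplus_0_r, sqrt_pow2 by (intros; rewrite ?Derive_const; ring || lra).
      reflexivity.
Qed.

End Length.

Definition log_potential (l a y x : R) : R :=
  ln (l ^ 2 * (x - a) ^ 2 * exp (- l * y) + exp (l * y)) / l.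

Section LogPotential.

Variables (l a : R).
Hypothesis l_pos : 0 < l.

Lemma log_potential_arg_pos y z : 0 < l ^ 2 * z ^ 2 * exp (- l * y) + exp (l * y).
Proof.
  pose proof (exp_pos (- l * y)). pose proof (exp_pos (l * y)). pose proof (pow2_ge_0 (l * z)).
  nra.
Qed.

Lemma log_potential_ex_derive (cy cx : R -> R) t :
  ex_derive cy t -> ex_derive cx t -> ex_derive (fun s => log_potential l a (cy s) (cx s)) t.
Proof.
  intros Hy Hx. unfold log_potential. auto_derive. repeat split; auto.
  apply log_potential_arg_pos.
Qed.

Lemma log_potential_Derive_le (cy cx : R -> R) t :
  ex_derive cy t -> ex_derive cx t ->
  Derive (fun s => log_potential l a (cy s) (cx s)) t <=
  sqrt (Derive cy t ^ 2 + exp (-2 * l * cy t) * Derive cx t ^ 2).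
Proof.
  intros Hy Hx. unfold log_potential.
  set (E := exp (l * cy t)).
  assert (HE : 0 < E) by apply exp_pos.
  assert (Hinv : exp (- l * cy t) = / E).
  { unfold E. rewrite <- exp_Ropp. f_equal. ring. }
  assert (Hinv2 : exp (-2 * l * cy t) = (/ E) ^ 2).
  { rewrite <- Hinv. simpl. rewrite Rmult_1_r, <- exp_plus. f_equal. ring. }
  set (u := cx t - a). set (v := Derive cy t). set (w := Derive cx t).
  set (B := l ^ 2 * u ^ 2 / E).
  assert (HB : 0 <= B) by (unfold B; apply Rmult_le_pos; [nra | left; now apply Rinv_0_lt_compat]).
  erewrite is_derive_unique.
  2:{ auto_derive; [| reflexivity]. repeat split; auto. apply log_potential_arg_pos. }
  change (Derive (fun x => cx x) t) with w. change (Derive (fun x => cy x) t) with v.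
  rewrite Hinv2, Hinv. fold E.
  replace (v ^ 2 + (/ E) ^ 2 * w ^ 2) with (v ^ 2 + (w / E) ^ 2) by (field; lra).
  (* (E - B)^2 + (2 l u)^2 = (E + B)^2, so Cauchy-Schwarz bounds the derivative by the speed *)
  match goal with |- ?L <= _ =>
    replace L with ((v * (E - B) + (2 * l * u) * (w / E)) / (E + B)) end.
  - apply Cauchy_Schwarz_ratio; [lra | unfold B; field; lra].
  - unfold B, u. field. pose proof (pow2_ge_0 (l * (cx t + - a))). nra.
Qed.

Lemma log_potential_on_axis y : log_potential l a y a = y.
Proof.
  unfold log_potential.
  replace (l ^ 2 * (a - a) ^ 2 * exp (- l * y) + exp (l * y)) with (exp (l * y)) by ring.
  rewrite ln_exp. field. lra.
Qed.

Lemma log_potential_ge k y0 y x :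
  0 < k -> k <= l ^ 2 * (exp (-2 * l * y0) * (x - a) ^ 2) ->
  2 * y0 - y + ln k / l <= log_potential l a y x.
Proof.
  intros Hk Hkle. unfold log_potential.
  replace (2 * y0 - y + ln k / l) with (ln (k * exp (l * (2 * y0 - y))) / l)
    by (rewrite ln_mult, ln_exp by (auto || apply exp_pos); field; lra).
  unfold Rdiv. apply Rmult_le_compat_r; [left; now apply Rinv_0_lt_compat |].
  assert (Hsplit : exp (- l * y) = exp (-2 * l * y0) * exp (l * (2 * y0 - y))).
  { rewrite <- exp_plus. f_equal. ring. }
  apply ln_le; [apply Rmult_lt_0_compat; auto; apply exp_pos |].
  rewrite Hsplit. pose proof (exp_pos (l * (2 * y0 - y))). pose proof (exp_pos (l * y)).
  nra.
Qed.

End LogPotential.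

Lemma rdist_ge_log_potential d lam (p q : point) j a :
  (j < d)%nat -> 0 < lam j ->
  log_potential (lam j) a (py q) (px q j) - log_potential (lam j) a (py p) (px p j)
  <= rdist d lam p q.
Proof.
  intros Hj Hl.
  set (seg_y := fun t => py p + (py q - py p) * t).
  set (seg_x := fun i t => px p i + (px q i - px p i) * t).
  apply (Glb_Rbar_real_ge _ (curve_length d lam seg_y seg_x)).
  { exists seg_y, seg_x. split; [| reflexivity].
    split; [apply C1_affine |]. split; [intros; apply C1_affine |].
    unfold seg_y, seg_x. repeat split; ring. }
  intros L [cy [cx [[Hcy [Hcx [Hy0 [Hy1 Hx]]]] ->]]].
  destruct (Hx j Hj) as [Hx0 Hx1]. destruct (Hcx j Hj) as [Hcxj _].
  rewrite <- Hy0, <- Hy1, <- Hx0, <- Hx1, curve_length_speed.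
  apply (diff_le_RInt_of_Derive_le (fun t => log_potential (lam j) a (cy t) (cx j t))).
  - intros t. apply log_potential_ex_derive; [apply Hcy | apply Hcxj].
  - now apply speed_continuous.
  - intros t. eapply Rle_trans; [apply log_potential_Derive_le; auto; apply Hcy |].
    apply sqrt_le_1_alt, Rplus_le_compat_l.
    apply (sum_lt_ge_term d (fun i => exp (-2 * lam i * cy t) * Derive (cx i) t ^ 2) j); [| exact Hj].
    intros i _. pose proof (exp_pos (-2 * lam i * cy t)). pose proof (pow2_ge_0 (Derive (cx i) t)).
    nra.
Qed.

Lemma hdist_eq1_heavy_coord d lam y (p q : point) :
  (1 <= d)%nat -> hdist d lam y p q = 1 ->
  exists j, (j < d)%nat /\ / INR d <= exp (-2 * lam j * y) * (px p j - px q j) ^ 2.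
Proof.
  intros Hd Hdist.
  set (S := sum_lt d (fun i => exp (-2 * lam i * y) * (px p i - px q i) ^ 2)).
  assert (HS0 : 0 <= S).
  { apply sum_lt_ge0. intros i _.
    pose proof (exp_pos (-2 * lam i * y)). pose proof (pow2_ge_0 (px p i - px q i)). nra. }
  apply sum_lt_eq1_exists_ge_inv; [exact Hd |].
  unfold hdist, hnorm in Hdist. fold S in Hdist. fold S.
  rewrite <- (sqrt_sqrt S), Hdist by exact HS0. ring.
Qed.

Theorem mainTheorem7 (d : nat) (lam : nat -> R) :
  (1 <= d)%nat ->
  (forall i, (i < d)%nat -> 0 < lam i) ->
  (forall i j, (i <= j)%nat -> (j < d)%nat -> lam i <= lam j) ->
  exists C : R, 0 < C /\
    forall (p p' q q' : point) (y : R),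
      on_ray d p p' -> on_ray d q q' ->
      h p' = y -> h q' = y ->
      hdist d lam y p' q' = 1 ->
      rdist d lam p p' + rdist d lam q q' <= rdist d lam p q + C.
Proof.
  intros Hd Hpos _.
  set (K := sum_lt d (fun j => Rabs (ln (lam j ^ 2 / INR d) / lam j))).
  assert (HK : 0 <= K) by (apply sum_lt_ge0; intros; apply Rabs_pos).
  exists (1 + K). split; [lra |].
  intros p p' q q' y [s [Hs [Hsy Hsx]]] [t [Ht [Hty Htx]]] Hp'y Hq'y Hdist. unfold h in *.
  pose proof (rdist_le_vertical d lam p p' s Hs Hsy Hsx).
  pose proof (rdist_le_vertical d lam q q' t Ht Hty Htx).
  destruct (hdist_eq1_heavy_coord d lam y p' q' Hd Hdist) as [j [Hj Hheavy]].
  assert (Hl : 0 < lam j) by auto.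
  assert (HdR : 0 < INR d) by (apply lt_0_INR; lia).
  pose proof (rdist_ge_log_potential d lam p q j (px p j) Hj Hl) as Hlower.
  rewrite log_potential_on_axis in Hlower by exact Hl.
  assert (Hq : 2 * y - py q + ln (lam j ^ 2 / INR d) / lam j
               <= log_potential (lam j) (px p j) (py q) (px q j)).
  { apply log_potential_ge; [exact Hl | apply Rdiv_lt_0_compat; nra |].
    rewrite <- Hsx, <- Htx by exact Hj.
    replace ((px q' j - px p' j) ^ 2) with ((px p' j - px q' j) ^ 2) by ring. unfold Rdiv.
    apply Rmult_le_compat_l; [nra | exact Hheavy]. }
  assert (Rabs (ln (lam j ^ 2 / INR d) / lam j) <= K)
    by (apply (sum_lt_ge_term d (fun j => Rabs (ln (lam j ^ 2 / INR d) / lam j)) j);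
        [intros; apply Rabs_pos | exact Hj]).
  pose proof (Rabs_maj2 (ln (lam j ^ 2 / INR d) / lam j)). lra.
Qed.
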